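(* Let $N_1,N_2,N_3,K$ be dyadic with $N_1\sim N_2\gg N_3$ and $K\ll N_1$, let $\phi_1,\phi_2,\phi_3\in L^2(\mathbb{T})$ satisfy $\mathrm{supp}\,\hat\phi_j\subset\mathcal{I}_{N_j}$, and let $0<\delta\lesssim N_1^{-1}$. Then \[ \big\|HP_{\le K}\big(e^{it\partial_x^2}\phi_1\,\overline{e^{it\partial_x^2}\phi_2}\big)\,e^{it\partial_x^2}\phi_3\big\|_{L^2([0,\delta];L^2(\mathbb{T}))}\lesssim\Big(\frac{K}{N_1}\Big)^{1/2}\|\phi_1\|_{L^2}\|\phi_2\|_{L^2}\|\phi_3\|_{L^2}. \] The same estimate holds if $e^{it\partial_x^2}\phi_3$ is replaced by $\overline{e^{it\partial_x^2}\phi_3}$, and also if $H$ is replaced by any Fourier multiplier with bounded symbol.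
   Context: $\mathbb{T}=\mathbb{R}/2\pi\mathbb{Z}$; $\hat\phi(n)$ are Fourier coefficients. $H$ is the Hilbert transformation (Fourier multiplier $-i\,\mathrm{sgn}(\xi)$). Fix $\eta\in C_0^\infty(\mathbb{R})$ even, monotone on $[0,\infty)$, with $\chi_{[-4/3,4/3]}\le\eta\le\chi_{[-5/3,5/3]}$; $P_{\le K}$ is the Fourier multiplier with symbol $\eta(\xi/K)$. Dyadic numbers range over $\{1,2,4,\dots\}$; $\mathcal{I}_1=[-2,2]$, $\mathcal{I}_N=[-2N,2N]\setminus(-N/2,N/2)$ for $N\ge2$. $A\sim B$ means $C^{-1}B\le A\le CB$ and $A\gg B$ means $A\ge C_0B$ for suitable absolute constants; $\lesssim$ hides constants depending only on these. *)

From Stdlib Require Import Reals ZArith Lra.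
From Coquelicot Require Import Coquelicot.
Open Scope R_scope.

Definition dy (k : nat) : R := 2 ^ k.

(* n in I_{2^k}:  I_1 = [-2,2],  I_N = [-2N,2N] \ (-N/2,N/2) for N >= 2 *)
Definition in_I (k : nat) (n : Z) : Prop :=
  if Nat.eqb k 0 then Rabs (IZR n) <= 2
  else dy k / 2 <= Rabs (IZR n) <= 2 * dy k.

(* supp \hat phi ⊂ I_{2^k}, phi given by its Fourier coefficients a *)
Definition supp_in (k : nat) (a : Z -> C) : Prop :=
  forall n : Z, ~ in_I k n -> a n = RtoC 0.

Definition chi (r x : R) : R := if Rle_dec (Rabs x) r then 1 else 0.

Definition eta_ok (eta : R -> R) : Prop :=
  (forall (k : nat) (x : R), ex_derive_n eta k x) /\
  (forall x, eta (- x) = eta x) /\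
  (forall x y, 0 <= x -> x <= y -> eta y <= eta x) /\
  (forall x, chi (4/3) x <= eta x /\ eta x <= chi (5/3) x).

Fixpoint csum (f : nat -> C) (n : nat) : C :=
  match n with
  | O => f O
  | S p => Cplus (csum f p) (f (S p))
  end.
Definition zsum (M : nat) (f : Z -> C) : C :=
  csum (fun j => f (Z.of_nat j - Z.of_nat M)%Z) (2 * M)%nat.

Definition cexpi (x : R) : C := (cos x, sin x).

Definition bnd (k : nat) : nat := (2 * Nat.pow 2 k)%nat.

(* (e^{it d_x^2} phi)(x) = sum_n a_n e^{i(n x - n^2 t)}, phi with supp \hat phi ⊂ I_{2^k} *)
Definition free_evol (k : nat) (a : Z -> C) (t x : R) : C :=
  zsum (bnd k) (fun n => Cmult (a n) (cexpi (IZR n * x - IZR n ^ 2 * t))).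

Definition phi_fun (k : nat) (a : Z -> C) : R -> C := free_evol k a 0.

Definition fcoef (f : R -> C) (n : Z) : C :=
  Cmult (RtoC (/ (2 * PI)))
        (@RInt C_R_CompleteNormedModule (fun x => Cmult (f x) (cexpi (- (IZR n * x)))) 0 (2 * PI)).

(* Fourier multiplier with symbol m composed with P_{<= K}, K = 2^kK.
   Since eta(n/K) = 0 for |n| > 5K/3, summing over |n| <= 2K is exact. *)
Definition mult_op (eta : R -> R) (m : Z -> C) (kK : nat) (f : R -> C) (x : R) : C :=
  zsum (bnd kK) (fun n =>
    Cmult (Cmult (m n) (RtoC (eta (IZR n / dy kK))))
          (Cmult (fcoef f n) (cexpi (IZR n * x)))).

Definition hsym (n : Z) : C := (0, - IZR (Z.sgn n)).

Definition l2T (f : R -> C) : R :=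
  sqrt (RInt (fun x => Cmod (f x) ^ 2) 0 (2 * PI)).

Definition l2tx (F : R -> R -> C) (delta : R) : R :=
  sqrt (RInt (fun t => RInt (fun x => Cmod (F t x) ^ 2) 0 (2 * PI)) 0 delta).

Definition output (eta : R -> R) (m : Z -> C) (kK k1 k2 k3 : nat) (cj : bool)
    (a1 a2 a3 : Z -> C) : R -> R -> C :=
  fun t x =>
    Cmult (mult_op eta m kK
             (fun y => Cmult (free_evol k1 a1 t y) (Cconj (free_evol k2 a2 t y))) x)
          (if cj then Cconj (free_evol k3 a3 t x) else free_evol k3 a3 t x).

(* the estimate with constants: A for ~ and delta <~ N1^{-1}, C0 for >>, C for <~ ;
   Mset the admissible multiplier symbols *)
Definition estimate_holds (eta : R -> R) (A C0 Cst : R) (Mset : (Z -> C) -> Prop) : Prop :=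
  forall (k1 k2 k3 kK : nat) (a1 a2 a3 : Z -> C) (delta : R) (cj : bool) (m : Z -> C),
    Mset m ->
    dy k1 <= A * dy k2 -> dy k2 <= A * dy k1 ->
    C0 * dy k3 <= dy k1 -> C0 * dy kK <= dy k1 ->
    supp_in k1 a1 -> supp_in k2 a2 -> supp_in k3 a3 ->
    0 < delta -> delta <= A / dy k1 ->
    l2tx (output eta m kK k1 k2 k3 cj a1 a2 a3) delta
      <= Cst * sqrt (dy kK / dy k1)
           * l2T (phi_fun k1 a1) * l2T (phi_fun k2 a2) * l2T (phi_fun k3 a3).

(* Writing a_j for the Fourier coefficients of φ_j, the output
   m(D)P_{≤K}(u1 ū2)·u3 (or ·ū3) is Σ_{n2} ā2(n2) H_{n2}(t, x), where H_{n2}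
   is a trigonometric polynomial indexed by pairs (n, n3): n is the frequency
   of u1 ū2 (so |n| ≤ 2K and n1 = n2 + n), the spatial frequency is n ± n3
   and the temporal one is (n2+n)² - n2² ± n3².  The proof runs as follows.
   1. Cauchy-Schwarz in n2 reduces matters to ∫_0^δ ‖H_{n2}‖²_{L²_x} for the
      n2 with |n2| ≥ N2/2.
   2. ‖H‖²_{L²_x} is a Gram form in the coefficients (orthogonality of
      characters on T).  It is a nonnegative function of t, so its integral
      over [0, δ] ⊂ [0, D] is dominated by an average over windows of length
      2D; a pair with temporal gap τ then costs at most min(2D², 4/τ²)/D.
   3. Two pairs with the same spatial frequency have temporal gap
      (n - n')(2n2 + n + n' - n3 - n3'), and the second factor is ≥ Λ ≈ N1/A
      because N1 ~ N2 ≫ K, N3.  Schur's test with Σ_d min(D², 1/(Λd)²) ≲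
      D² + 1/Λ² bounds the Gram form by (D + 1/(DΛ²)) Σ|coef|² ≲ (A/N1) Σ|coef|².
   4. Summing over n2, Σ_{n2} Σ_{|n|≤2K} |a1(n2 + n)|² ≤ (4K + 1) Σ|a1|²,
      and Parseval turns coefficient sums into L²(T) norms. *)

From Stdlib Require Import Reals ZArith Lra Lia List Psatz.
From Coquelicot Require Import Coquelicot.
Open Scope R_scope.

Definition sumR {A} (l : list A) (f : A -> R) : R := fold_right (fun a s => f a + s) 0 l.
Definition sumC {A} (l : list A) (f : A -> C) : C :=
  fold_right (fun a s => Cplus (f a) s) (RtoC 0) l.

Lemma sumR_ext {A} (l : list A) f g : (forall a, In a l -> f a = g a) -> sumR l f = sumR l g.
Proof. induction l; simpl; intros H; auto. rewrite H, IHl; auto. Qed.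

Lemma sumC_ext {A} (l : list A) f g : (forall a, In a l -> f a = g a) -> sumC l f = sumC l g.
Proof. induction l; simpl; intros H; auto. rewrite H, IHl; auto. Qed.

Lemma sumR_le {A} (l : list A) f g : (forall a, In a l -> f a <= g a) -> sumR l f <= sumR l g.
Proof.
  induction l; simpl; intros H; [lra|].
  pose proof (H a (or_introl eq_refl)). pose proof (IHl (fun x h => H x (or_intror h))). lra.
Qed.

Lemma sumR_zero {A} (l : list A) : sumR l (fun _ => 0) = 0.
Proof. induction l; simpl; auto. rewrite IHl; lra. Qed.

Lemma sumR_nonneg {A} (l : list A) f : (forall a, In a l -> 0 <= f a) -> 0 <= sumR l f.
Proof. intros H. rewrite <- (sumR_zero l). apply sumR_le; auto. Qed.

Lemma sumR_plus {A} (l : list A) f g : sumR l (fun a => f a + g a) = sumR l f + sumR l g.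
Proof. induction l; simpl; [lra|]. rewrite IHl; lra. Qed.

Lemma sumR_scal {A} (l : list A) c f : sumR l (fun a => c * f a) = c * sumR l f.
Proof. induction l; simpl; [lra|]. rewrite IHl; lra. Qed.

Lemma sumR_scal_r {A} (l : list A) c f : sumR l (fun a => f a * c) = sumR l f * c.
Proof. induction l; simpl; [lra|]. rewrite IHl; lra. Qed.

Lemma sumR_const {A} (l : list A) c : sumR l (fun _ => c) = c * INR (length l).
Proof. induction l; simpl sumR; simpl length; [simpl; ring|]. rewrite IHl, S_INR. ring. Qed.

Lemma sumR_app {A} (l1 l2 : list A) f : sumR (l1 ++ l2) f = sumR l1 f + sumR l2 f.
Proof. induction l1; simpl; [lra|]. rewrite IHl1; lra. Qed.

Lemma sumR_map {A B} (h : B -> A) l f : sumR (map h l) f = sumR l (fun b => f (h b)).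
Proof. induction l; simpl; auto. rewrite IHl; auto. Qed.

Lemma sumR_swap {A B} (l1 : list A) (l2 : list B) f :
  sumR l1 (fun a => sumR l2 (fun b => f a b)) = sumR l2 (fun b => sumR l1 (fun a => f a b)).
Proof. induction l1; simpl. symmetry; apply sumR_zero. rewrite IHl1, <- sumR_plus; auto. Qed.

Lemma sumR_prod {A B} (l1 : list A) (l2 : list B) f :
  sumR (list_prod l1 l2) f = sumR l1 (fun a => sumR l2 (fun b => f (a, b))).
Proof. induction l1; simpl; auto. rewrite sumR_app, sumR_map, IHl1; auto. Qed.

Lemma sumR_mult {A B} (l1 : list A) (l2 : list B) f g :
  sumR l1 (fun a => sumR l2 (fun b => f a * g b)) = sumR l1 f * sumR l2 g.
Proof. rewrite <- sumR_scal_r. apply sumR_ext; intros. apply sumR_scal. Qed.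

Lemma sumC_zero {A} (l : list A) : sumC l (fun _ => RtoC 0) = RtoC 0.
Proof. induction l; simpl; auto. rewrite IHl. apply Cplus_0_r. Qed.

Lemma sumC_plus {A} (l : list A) f g : sumC l (fun a => Cplus (f a) (g a)) = Cplus (sumC l f) (sumC l g).
Proof. induction l; simpl. symmetry; apply Cplus_0_r. rewrite IHl. ring. Qed.

Lemma sumC_mult_l {A} (l : list A) c f : sumC l (fun a => Cmult c (f a)) = Cmult c (sumC l f).
Proof. induction l; simpl. symmetry; apply Cmult_0_r. rewrite IHl. ring. Qed.

Lemma sumC_mult_r {A} (l : list A) c f : sumC l (fun a => Cmult (f a) c) = Cmult (sumC l f) c.
Proof. induction l; simpl. symmetry; apply Cmult_0_l. rewrite IHl. ring. Qed.

Lemma sumC_app {A} (l1 l2 : list A) f : sumC (l1 ++ l2) f = Cplus (sumC l1 f) (sumC l2 f).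
Proof. induction l1; simpl. symmetry; apply Cplus_0_l. rewrite IHl1; ring. Qed.

Lemma sumC_map {A B} (h : B -> A) l f : sumC (map h l) f = sumC l (fun b => f (h b)).
Proof. induction l; simpl; auto. rewrite IHl; auto. Qed.

Lemma sumC_swap {A B} (l1 : list A) (l2 : list B) f :
  sumC l1 (fun a => sumC l2 (fun b => f a b)) = sumC l2 (fun b => sumC l1 (fun a => f a b)).
Proof. induction l1; simpl. symmetry; apply sumC_zero. rewrite IHl1, <- sumC_plus; auto. Qed.

Lemma sumC_prod {A B} (l1 : list A) (l2 : list B) f :
  sumC (list_prod l1 l2) f = sumC l1 (fun a => sumC l2 (fun b => f (a, b))).
Proof. induction l1; simpl; auto. rewrite sumC_app, sumC_map, IHl1; auto. Qed.

Lemma sumC_mult {A B} (l1 : list A) (l2 : list B) f g :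
  Cmult (sumC l1 f) (sumC l2 g) = sumC l1 (fun a => sumC l2 (fun b => Cmult (f a) (g b))).
Proof. rewrite <- sumC_mult_r. apply sumC_ext; intros. rewrite <- sumC_mult_l. auto. Qed.

Lemma sumC_conj {A} (l : list A) f : Cconj (sumC l f) = sumC l (fun a => Cconj (f a)).
Proof.
  induction l; simpl. apply injective_projections; simpl; lra.
  rewrite <- IHl. apply injective_projections; simpl; lra.
Qed.

Lemma fst_sumC {A} (l : list A) f : fst (sumC l f) = sumR l (fun a => fst (f a)).
Proof. induction l; simpl; auto. rewrite IHl; auto. Qed.

Lemma Cmod_sumC {A} (l : list A) f : Cmod (sumC l f) <= sumR l (fun a => Cmod (f a)).
Proof.
  induction l; simpl. rewrite Cmod_0; lra.
  eapply Rle_trans; [apply Cmod_triangle | lra].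
Qed.

Lemma Cmod2_sumC {A} (l : list A) f :
  Cmod (sumC l f) ^ 2 = sumR l (fun j => sumR l (fun k => fst (Cmult (f j) (Cconj (f k))))).
Proof.
  change (Cmod (sumC l f) ^ 2) with (fst (RtoC (Cmod (sumC l f) ^ 2))).
  rewrite Cmod2_conj, sumC_conj, sumC_mult, fst_sumC. apply sumR_ext; intros. apply fst_sumC.
Qed.

(* Cauchy-Schwarz for finite sums, from Lagrange's identity
   Σ_{i,j} (a_i b_j - a_j b_i)² = 2 (Σa²)(Σb²) - 2 (Σab)². *)
Lemma sumR_cauchy_schwarz {A} (l : list A) a b :
  (sumR l (fun i => a i * b i)) ^ 2 <= sumR l (fun i => a i ^ 2) * sumR l (fun i => b i ^ 2).
Proof.
  assert (Hpos : 0 <= sumR l (fun i => sumR l (fun j => (a i * b j - a j * b i) ^ 2))).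
  { apply sumR_nonneg; intros; apply sumR_nonneg; intros; apply pow2_ge_0. }
  assert (Lagrange : sumR l (fun i => sumR l (fun j => (a i * b j - a j * b i) ^ 2)) =
     2 * (sumR l (fun i => a i ^ 2) * sumR l (fun i => b i ^ 2))
     - 2 * (sumR l (fun i => a i * b i)) ^ 2).
  { rewrite (sumR_ext l _ (fun i => sumR l (fun j => a i ^ 2 * b j ^ 2)
        + sumR l (fun j => a j ^ 2 * b i ^ 2)
        + (-2) * sumR l (fun j => (a i * b i) * (a j * b j)))).
    2: { intros. rewrite <- sumR_scal, <- !sumR_plus. apply sumR_ext; intros. ring. }
    rewrite !sumR_plus, sumR_scal, (sumR_swap l l (fun i j => a j ^ 2 * b i ^ 2)).
    rewrite (sumR_mult l l (fun i => a i ^ 2) (fun j => b j ^ 2)).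
    rewrite (sumR_mult l l (fun i => a i * b i) (fun j => a j * b j)). ring. }
  lra.
Qed.

Lemma sumC_cauchy_schwarz {A} (l : list A) u v :
  Cmod (sumC l (fun i => Cmult (u i) (v i))) ^ 2 <=
  sumR l (fun i => Cmod (u i) ^ 2) * sumR l (fun i => Cmod (v i) ^ 2).
Proof.
  eapply Rle_trans; [| apply sumR_cauchy_schwarz].
  assert (H0 : 0 <= Cmod (sumC l (fun i => Cmult (u i) (v i)))) by apply Cmod_ge_0.
  assert (H : Cmod (sumC l (fun i => Cmult (u i) (v i)))
              <= sumR l (fun i => Cmod (u i) * Cmod (v i))).
  { eapply Rle_trans; [apply Cmod_sumC | right; apply sumR_ext; intros; apply Cmod_mult]. }
  nra.
Qed.

Lemma sumR_indicator_le {A} (l : list A) (P : A -> Prop) (dec : forall a, {P a} + {~ P a}) c :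
  NoDup l -> 0 <= c -> (forall x y, In x l -> In y l -> P x -> P y -> x = y) ->
  sumR l (fun x => if dec x then c else 0) <= c.
Proof.
  induction l; intros Hn Hc Hu; simpl; [lra|].
  inversion Hn; subst. destruct (dec a).
  - rewrite (sumR_ext l _ (fun _ => 0)), sumR_zero; [lra|].
    intros x Hx. destruct (dec x); auto.
    assert (x = a) by (apply Hu; simpl; auto). subst; contradiction.
  - enough (sumR l (fun x => if dec x then c else 0) <= c) by lra.
    apply IHl; auto. intros; apply Hu; simpl; auto.
Qed.

Definition zwin (M : nat) : list Z :=
  map (fun j => (Z.of_nat j - Z.of_nat M)%Z) (seq 0 (2 * M + 1)).

Lemma csum_sumC f n : csum f n = sumC (seq 0 (S n)) f.
Proof.
  induction n; [simpl; symmetry; apply Cplus_0_r|].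
  rewrite seq_S, sumC_app. simpl csum. rewrite IHn. simpl. f_equal. symmetry; apply Cplus_0_r.
Qed.

Lemma zsum_sumC M f : zsum M f = sumC (zwin M) f.
Proof. unfold zsum, zwin. rewrite csum_sumC, sumC_map. do 2 f_equal. lia. Qed.

Lemma In_zwin M n : In n (zwin M) <-> (- Z.of_nat M <= n <= Z.of_nat M)%Z.
Proof.
  unfold zwin. rewrite in_map_iff. split.
  - intros [j [<- Hj]]. apply in_seq in Hj. lia.
  - intros H. exists (Z.to_nat (n + Z.of_nat M)). split; [lia | apply in_seq; lia].
Qed.

Lemma NoDup_zwin M : NoDup (zwin M).
Proof.
  apply NoDup_map_NoDup_ForallPairs; [intros x y _ _ H; lia | apply seq_NoDup].
Qed.

Lemma zwin_length M : length (zwin M) = (2 * M + 1)%nat.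
Proof. unfold zwin. rewrite length_map, length_seq. auto. Qed.

Lemma dy_ge_1 k : 1 <= dy k.
Proof. unfold dy. induction k; simpl; lra. Qed.

Lemma IZR_bnd k : IZR (Z.of_nat (bnd k)) = 2 * dy k.
Proof.
  rewrite <- INR_IZR_INZ. unfold bnd, dy. rewrite mult_INR, pow_INR. reflexivity.
Qed.

Lemma zwin_bnd_abs k n : In n (zwin (bnd k)) <-> Rabs (IZR n) <= 2 * dy k.
Proof.
  rewrite In_zwin, <- IZR_bnd. split.
  - intros [H1 H2]. apply IZR_le in H1. apply IZR_le in H2. rewrite opp_IZR in H1.
    apply Rabs_le; lra.
  - intros H. assert (H1 : IZR (- Z.of_nat (bnd k)) <= IZR n) by
      (rewrite opp_IZR; revert H; unfold Rabs; destruct Rcase_abs; lra).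
    assert (H2 : IZR n <= IZR (Z.of_nat (bnd k))) by
      (revert H; unfold Rabs; destruct Rcase_abs; lra).
    apply le_IZR in H1. apply le_IZR in H2. lia.
Qed.

Lemma supp_in_zwin k a n : supp_in k a -> ~ In n (zwin (bnd k)) -> a n = RtoC 0.
Proof.
  intros H Hn. apply H. intros Hi. apply Hn, zwin_bnd_abs. unfold in_I in Hi.
  destruct (Nat.eqb k 0) eqn:E; [apply Nat.eqb_eq in E; subst; unfold dy; simpl; lra | lra].
Qed.

Lemma sumC_pick (l : list Z) (y : Z) (g : Z -> C) :
  NoDup l -> (~ In y l -> g y = RtoC 0) ->
  sumC l (fun x => if Z.eq_dec x y then g x else RtoC 0) = g y.
Proof.
  induction l; intros Hn Hg; simpl; [symmetry; apply Hg; auto|].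
  inversion Hn; subst. destruct (Z.eq_dec a y).
  - subst. rewrite (sumC_ext l _ (fun _ => RtoC 0)), sumC_zero; [apply Cplus_0_r|].
    intros x Hx. destruct (Z.eq_dec x y); auto. subst; contradiction.
  - rewrite IHl; auto; [apply Cplus_0_l|]. intros Hy. apply Hg. intros [H|H]; auto.
Qed.

Lemma sumR_pick (l : list Z) (y : Z) (g : Z -> R) :
  NoDup l -> In y l -> sumR l (fun x => if Z.eq_dec y x then g x else 0) = g y.
Proof.
  induction l; intros Hn Hy; simpl; [inversion Hy|].
  inversion Hn; subst. destruct (Z.eq_dec y a).
  - subst. rewrite (sumR_ext l _ (fun _ => 0)), sumR_zero; [ring|].
    intros x Hx. destruct (Z.eq_dec a x); auto. subst; contradiction.
  - destruct Hy; [subst; contradiction|]. rewrite IHl; auto. ring.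
Qed.

Lemma sumR_shift_le (M M1 : nat) (f : Z -> R) n :
  (forall y, 0 <= f y) -> (forall y, ~ In y (zwin M1) -> f y = 0) ->
  sumR (zwin M) (fun n2 => f (n2 + n)%Z) <= sumR (zwin M1) f.
Proof.
  intros Hf Hs.
  rewrite (sumR_ext (zwin M) _ (fun n2 => sumR (zwin M1) (fun y => if Z.eq_dec (n2 + n) y then f y else 0))).
  2: { intros n2 _. destruct (in_dec Z.eq_dec (n2 + n)%Z (zwin M1)).
       - rewrite sumR_pick; auto. apply NoDup_zwin.
       - rewrite Hs, (sumR_ext _ _ (fun _ => 0)); [symmetry; apply sumR_zero | | auto].
         intros y Hy. destruct (Z.eq_dec (n2 + n) y); auto. subst; contradiction. }
  rewrite sumR_swap. apply sumR_le; intros y _.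
  apply (sumR_indicator_le (zwin M) (fun x => (x + n)%Z = y) (fun x => Z.eq_dec (x + n) y)).
  apply NoDup_zwin. auto. intros; lia.
Qed.

Lemma cexpi_add a b : Cmult (cexpi a) (cexpi b) = cexpi (a + b).
Proof. unfold cexpi. apply injective_projections; simpl; rewrite ?cos_plus, ?sin_plus; ring. Qed.

Lemma cexpi_conj a : Cconj (cexpi a) = cexpi (- a).
Proof. unfold cexpi, Cconj. simpl. rewrite cos_neg, sin_neg. reflexivity. Qed.

Lemma cexpi_eq a b : a = b -> cexpi a = cexpi b.
Proof. intros ->; reflexivity. Qed.

Lemma sin_cos_shift_period (m : Z) c :
  sin (IZR m * (2 * PI) + c) = sin c /\ cos (IZR m * (2 * PI) + c) = cos c.
Proof.
  destruct (Z_le_gt_dec 0 m).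
  - rewrite <- (Z2Nat.id m), <- INR_IZR_INZ by lia.
    replace (INR (Z.to_nat m) * (2 * PI) + c) with (c + 2 * INR (Z.to_nat m) * PI) by ring.
    rewrite sin_period, cos_period. auto.
  - replace m with (- Z.of_nat (Z.to_nat (- m)))%Z by lia.
    rewrite opp_IZR, <- INR_IZR_INZ. set (k := Z.to_nat (-m)).
    pose proof (sin_period (- INR k * (2 * PI) + c) k) as Hs.
    pose proof (cos_period (- INR k * (2 * PI) + c) k) as Hc.
    replace (- INR k * (2 * PI) + c + 2 * INR k * PI) with c in * by ring. auto.
Qed.

Lemma is_RInt_zero {V : NormedModule R_AbsRing} a b : is_RInt (fun _ => @zero V) a b zero.
Proof.
  pose proof (is_RInt_const (V := V) a b zero) as H.
  rewrite (@scal_zero_r (AbsRing.Ring R_AbsRing) (NormedModule.ModuleSpace R_AbsRing V)) in H.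
  exact H.
Qed.

Lemma is_RInt_sumR {A} (l : list A) (f : A -> R -> R) a b v :
  (forall j, In j l -> is_RInt (f j) a b (v j)) ->
  is_RInt (fun x => sumR l (fun j => f j x)) a b (sumR l v).
Proof.
  induction l; intros H; simpl; [apply (is_RInt_zero (V := R_NormedModule))|].
  apply (is_RInt_plus (V := R_NormedModule)); [apply H; simpl; auto|].
  apply IHl; intros; apply H; simpl; auto.
Qed.

Lemma is_RInt_sumC {A} (l : list A) (f : A -> R -> C) a b v :
  (forall j, In j l -> is_RInt (V := C_R_NormedModule) (f j) a b (v j)) ->
  is_RInt (V := C_R_NormedModule) (fun x => sumC l (fun j => f j x)) a b (sumC l v).
Proof.
  induction l; intros H; simpl; [apply (is_RInt_zero (V := C_R_NormedModule))|].
  apply (is_RInt_plus (V := C_R_NormedModule)); [apply H; simpl; auto|].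
  apply IHl; intros; apply H; simpl; auto.
Qed.

Lemma is_RInt_const_R (c a b : R) : is_RInt (fun _ => c) a b ((b - a) * c).
Proof.
  replace ((b - a) * c) with (scal (b - a) c) by reflexivity.
  apply (is_RInt_const (V := R_NormedModule)).
Qed.

Lemma char_integral_re (z : C) (m : Z) (c : R) :
  is_RInt (fun x => fst (Cmult z (cexpi (IZR m * x + c)))) 0 (2 * PI)
    (if Z.eq_dec m 0 then 2 * PI * fst (Cmult z (cexpi c)) else 0).
Proof.
  destruct (Z.eq_dec m 0) as [->|Hm0].
  - eapply is_RInt_ext with (f := fun _ => fst (Cmult z (cexpi c))).
    + intros. do 3 f_equal. simpl; ring.
    + replace (2 * PI * fst (Cmult z (cexpi c))) with ((2 * PI - 0) * fst (Cmult z (cexpi c)))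
        by ring. apply is_RInt_const_R.
  - assert (Hm : IZR m <> 0) by (apply not_0_IZR; auto).
    set (F := fun x => (fst z * sin (IZR m * x + c) + snd z * cos (IZR m * x + c)) / IZR m).
    assert (E : minus (F (2 * PI)) (F 0) = 0).
    { unfold F, minus, plus, opp; simpl. destruct (sin_cos_shift_period m c) as [H1 H2].
      rewrite H1, H2, Rmult_0_r, Rplus_0_l. field. auto. }
    enough (H : is_RInt (fun x => fst (Cmult z (cexpi (IZR m * x + c)))) 0 (2 * PI)
                  (minus (F (2 * PI)) (F 0))) by (rewrite E in H; exact H).
    apply (is_RInt_derive (V := R_CompleteNormedModule)).
    + intros x _. unfold F. auto_derive; auto. unfold cexpi; simpl. field. auto.
    + intros x _. unfold cexpi; simpl.
      apply (ex_derive_continuous (V := R_NormedModule)). auto_derive. auto.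
Qed.

Lemma char_integral (z : C) (m : Z) (c : R) :
  is_RInt (V := C_R_NormedModule) (fun x => Cmult z (cexpi (IZR m * x + c))) 0 (2 * PI)
    (if Z.eq_dec m 0 then Cmult (RtoC (2 * PI)) (Cmult z (cexpi c)) else RtoC 0).
Proof.
  apply (is_RInt_fct_extend_pair (U := R_NormedModule) (V := R_NormedModule)).
  - pose proof (char_integral_re z m c) as H. destruct (Z.eq_dec m 0); simpl in *; [| exact H].
    replace (2 * PI * (fst z * cos c - snd z * sin c) - 0 * (fst z * sin c + snd z * cos c))
      with (2 * PI * (fst z * cos c - snd z * sin c)) by ring. exact H.
  - (* the imaginary part is the real part of (-i) z e^{i(mx + c)} *)
    pose proof (char_integral_re (Cmult z (0, -1)) m c) as H.
    destruct (Z.eq_dec m 0); simpl in *.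
    + eapply is_RInt_ext; [| replace (2 * PI * (fst z * sin c + snd z * cos c)
            + 0 * (fst z * cos c - snd z * sin c)) with (2 * PI * ((fst z * 0 - snd z * -1)
            * cos c - (fst z * -1 + snd z * 0) * sin c)) by ring; exact H].
      intros; simpl; ring.
    + eapply is_RInt_ext; [| exact H]. intros; simpl; ring.
Qed.

Definition re_phase (z : C) (tau t : R) : R := fst z * cos (tau * t) + snd z * sin (tau * t).

Definition gram {A} (J : list A) (g : A -> C) (xi : A -> Z) (ph : A -> R) (t : R) : R :=
  sumR J (fun j => sumR J (fun k => if Z.eq_dec (xi j) (xi k)
     then 2 * PI * re_phase (Cmult (g j) (Cconj (g k))) (ph j - ph k) t else 0)).

Lemma gram_identity {A} (J : list A) g xi ph t :
  is_RInt (fun x => Cmod (sumC J (fun j => Cmult (g j) (cexpi (IZR (xi j) * x - ph j * t)))) ^ 2)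
     0 (2 * PI) (gram J g xi ph t).
Proof.
  apply (is_RInt_ext (fun x => sumR J (fun j => sumR J (fun k =>
       fst (Cmult (Cmult (g j) (Cconj (g k)))
                  (cexpi (IZR (xi j - xi k) * x + (- (ph j - ph k) * t)))))))).
  { intros x _. rewrite Cmod2_sumC. apply sumR_ext; intros j _. apply sumR_ext; intros k _.
    f_equal. rewrite Cmult_conj, cexpi_conj.
    replace (IZR (xi j - xi k) * x + - (ph j - ph k) * t) with
      ((IZR (xi j) * x - ph j * t) + - (IZR (xi k) * x - ph k * t)) by (rewrite minus_IZR; ring).
    rewrite <- cexpi_add. ring. }
  replace (gram J g xi ph t) with (sumR J (fun j => sumR J (fun k =>
     if Z.eq_dec (xi j - xi k) 0
     then 2 * PI * fst (Cmult (Cmult (g j) (Cconj (g k))) (cexpi (- (ph j - ph k) * t)))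
     else 0))).
  { apply is_RInt_sumR; intros j _. apply is_RInt_sumR; intros k _. apply char_integral_re. }
  unfold gram. apply sumR_ext; intros j _. apply sumR_ext; intros k _.
  destruct (Z.eq_dec (xi j - xi k) 0); destruct (Z.eq_dec (xi j) (xi k)); try lia; auto.
  unfold re_phase, cexpi.
  replace (- (ph j - ph k) * t) with (- ((ph j - ph k) * t)) by ring.
  rewrite cos_neg, sin_neg. simpl. ring.
Qed.

Lemma ex_derive_sumR {A} (l : list A) (f : A -> R -> R) x :
  (forall j, In j l -> ex_derive (f j) x) -> ex_derive (fun t => sumR l (fun j => f j t)) x.
Proof.
  induction l; intros H; simpl; [apply (ex_derive_const (V := R_NormedModule))|].
  apply (ex_derive_plus (V := R_NormedModule) (f a) (fun t => sumR l (fun j => f j t))).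
  - apply H; simpl; auto.
  - apply IHl; intros; apply H; simpl; auto.
Qed.

Lemma gram_ex_RInt {A} (J : list A) g xi ph a b : ex_RInt (gram J g xi ph) a b.
Proof.
  apply (ex_RInt_continuous (V := R_CompleteNormedModule)). intros t _.
  apply (ex_derive_continuous (V := R_NormedModule)).
  apply ex_derive_sumR; intros j _. apply ex_derive_sumR; intros k _.
  destruct (Z.eq_dec (xi j) (xi k)); [unfold re_phase; auto_derive; auto|].
  apply (ex_derive_const (V := R_NormedModule)).
Qed.

Lemma gram_nonneg {A} (J : list A) g xi ph t : 0 <= gram J g xi ph t.
Proof.
  eapply (is_RInt_ge_0 _ 0 (2 * PI)); [pose proof PI_RGT_0; lra | apply gram_identity |].
  intros; apply pow2_ge_0.
Qed.

(* Time averaging.  A nonnegative G satisfies, for 0 < δ ≤ D,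
   D ∫_0^δ G ≤ ∫_{-D}^0 ∫_s^{s+2D} G(t) dt ds, since [0, δ] ⊂ [s, s + 2D]. *)
Lemma window_average_bound (G I : R -> R) (O D delta : R) :
  0 < delta <= D -> (forall t, 0 <= G t) -> (forall a b, ex_RInt G a b) ->
  (forall s, is_RInt G s (s + 2 * D) (I s)) -> is_RInt I (- D) 0 O ->
  RInt G 0 delta <= / D * O.
Proof.
  intros [Hd HD] Hpos Hex HI HO.
  assert (Hnn : forall a b, a <= b -> 0 <= RInt G a b) by (intros; apply RInt_ge_0; auto).
  assert (Hwin : forall s, - D <= s <= 0 -> RInt G 0 D <= I s).
  { intros s Hs. rewrite <- (is_RInt_unique _ _ _ _ (HI s)).
    rewrite <- (RInt_Chasles G s 0 (s + 2 * D)), <- (RInt_Chasles G 0 D (s + 2 * D)) by auto.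
    pose proof (Hnn s 0 (proj2 Hs)). assert (0 <= RInt G D (s + 2 * D)) by (apply Hnn; lra).
    unfold plus; simpl. lra. }
  assert (Havg : D * RInt G 0 D <= O).
  { apply (is_RInt_le (fun _ => RInt G 0 D) I (- D) 0); [lra| |auto|].
    - replace (D * RInt G 0 D) with ((0 - - D) * RInt G 0 D) by ring. apply is_RInt_const_R.
    - intros; apply Hwin; lra. }
  assert (Hmono : RInt G 0 delta <= RInt G 0 D).
  { rewrite <- (RInt_Chasles G 0 delta D) by auto. pose proof (Hnn delta D HD).
    unfold plus; simpl. lra. }
  apply (Rmult_le_reg_l D); [lra|]. rewrite <- Rmult_assoc, Rinv_r, Rmult_1_l by lra. nra.
Qed.

(* For one pair with phase gap τ: the window integral ∫_s^{s+2D} Re(z e^{-iτt}) dt,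
   a primitive of it in s, and its average ∫_{-D}^0 over s. *)
Definition window_int (D : R) (z : C) (tau s : R) : R :=
  if Req_EM_T tau 0 then 2 * D * fst z else
  ((fst z * sin (tau * (s + 2 * D)) - snd z * cos (tau * (s + 2 * D)))
   - (fst z * sin (tau * s) - snd z * cos (tau * s))) / tau.
Definition window_prim (D : R) (z : C) (tau s : R) : R :=
  (- fst z * cos (tau * (s + 2 * D)) - snd z * sin (tau * (s + 2 * D))
   + fst z * cos (tau * s) + snd z * sin (tau * s)) / (tau * tau).
Definition window_avg (D : R) (z : C) (tau : R) : R :=
  if Req_EM_T tau 0 then 2 * D * D * fst z
  else window_prim D z tau 0 - window_prim D z tau (- D).

Definition gap_weight (D tau : R) : R := if Req_EM_T tau 0 then 2 * D * D else 4 / (tau * tau).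

Lemma gap_weight_nonneg D tau : 0 <= gap_weight D tau.
Proof.
  unfold gap_weight. destruct (Req_EM_T tau 0); [nra|].
  assert (0 < tau * tau) by nra.
  unfold Rdiv. apply Rmult_le_pos; [lra|]. left; apply Rinv_0_lt_compat; auto.
Qed.

Lemma window_int_correct D z tau s : is_RInt (re_phase z tau) s (s + 2 * D) (window_int D z tau s).
Proof.
  unfold window_int. destruct (Req_EM_T tau 0).
  - subst. apply (is_RInt_ext (fun _ => fst z)).
    + intros; unfold re_phase. rewrite Rmult_0_l, cos_0, sin_0. lra.
    + replace (2 * D * fst z) with ((s + 2 * D - s) * fst z) by ring. apply is_RInt_const_R.
  - set (F := fun t => (fst z * sin (tau * t) - snd z * cos (tau * t)) / tau).
    replace (_ / tau) with (minus (F (s + 2 * D)) (F s))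
      by (unfold F, minus, plus, opp; simpl; field; auto).
    apply (is_RInt_derive (V := R_CompleteNormedModule) F).
    + intros x _. unfold F, re_phase. auto_derive; auto. field. auto.
    + intros x _. unfold re_phase. apply (ex_derive_continuous (V := R_NormedModule)).
      auto_derive. auto.
Qed.

Lemma window_avg_correct D z tau : is_RInt (window_int D z tau) (- D) 0 (window_avg D z tau).
Proof.
  unfold window_avg, window_int. destruct (Req_EM_T tau 0).
  - replace (2 * D * D * fst z) with ((0 - - D) * (2 * D * fst z)) by ring. apply is_RInt_const_R.
  - change (window_prim D z tau 0 - window_prim D z tau (- D))
      with (minus (window_prim D z tau 0) (window_prim D z tau (- D))).
    apply (is_RInt_derive (V := R_CompleteNormedModule) (window_prim D z tau)).
    + intros x _. unfold window_prim. auto_derive; auto. field. auto.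
    + intros x _. apply (ex_derive_continuous (V := R_NormedModule)).
      unfold window_prim. auto_derive. auto.
Qed.

Lemma abs_re_im_le (z : C) : Rabs (fst z) + Rabs (snd z) <= 2 * Cmod z.
Proof.
  destruct z as [x y]. unfold Cmod. cbn [fst snd].
  assert (Rabs x <= sqrt (x ^ 2 + y ^ 2)).
  { rewrite <- sqrt_Rsqr_abs. apply sqrt_le_1_alt. unfold Rsqr. nra. }
  assert (Rabs y <= sqrt (x ^ 2 + y ^ 2)).
  { rewrite <- sqrt_Rsqr_abs. apply sqrt_le_1_alt. unfold Rsqr. nra. }
  lra.
Qed.

Lemma Rabs_sum4 a b c d : Rabs (- a - b + c + d) <= Rabs a + Rabs b + Rabs c + Rabs d.
Proof.
  pose proof (Rabs_triang (- a - b + c) d). pose proof (Rabs_triang (- a - b) c).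
  pose proof (Rabs_triang (- a) (- b)) as Hab. rewrite !Rabs_Ropp in Hab. unfold Rminus in *. lra.
Qed.

(* |window_avg| ≤ 2|z| min(2D², 4/τ²): the primitives are bounded by 2(|Re z| + |Im z|)/τ². *)
Lemma window_avg_bound D z tau : 0 < D -> Rabs (window_avg D z tau) <= 2 * Cmod z * gap_weight D tau.
Proof.
  intros HD. pose proof (abs_re_im_le z) as Hz.
  enough (Rabs (window_avg D z tau) <= (Rabs (fst z) + Rabs (snd z)) * gap_weight D tau).
  { pose proof (gap_weight_nonneg D tau). nra. }
  unfold window_avg, gap_weight. destruct (Req_EM_T tau 0).
  - rewrite Rabs_mult, (Rabs_right (2 * D * D)) by nra. pose proof (Rabs_pos (snd z)). nra.
  - assert (Ht : 0 < tau * tau) by nra.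
    assert (Hcs : forall a x, Rabs (a * cos x) <= Rabs a /\ Rabs (a * sin x) <= Rabs a).
    { intros a x. rewrite !Rabs_mult. pose proof (COS_bound x). pose proof (SIN_bound x).
      assert (Rabs (cos x) <= 1) by (apply Rabs_le; lra).
      assert (Rabs (sin x) <= 1) by (apply Rabs_le; lra).
      pose proof (Rabs_pos a). pose proof (Rabs_pos (cos x)). pose proof (Rabs_pos (sin x)). nra. }
    assert (HG : forall s, Rabs (window_prim D z tau s)
                           <= 2 * (Rabs (fst z) + Rabs (snd z)) / (tau * tau)).
    { intros s. unfold window_prim, Rdiv. rewrite Rabs_mult.
      rewrite (Rabs_right (/ (tau * tau))) by (left; apply Rinv_0_lt_compat; auto).
      apply Rmult_le_compat_r; [left; apply Rinv_0_lt_compat; auto|].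
      destruct (Hcs (fst z) (tau * (s + 2 * D))), (Hcs (snd z) (tau * (s + 2 * D))).
      destruct (Hcs (fst z) (tau * s)), (Hcs (snd z) (tau * s)).
      replace (- fst z * cos (tau * (s + 2 * D))) with (- (fst z * cos (tau * (s + 2 * D)))) by ring.
      eapply Rle_trans; [apply Rabs_sum4|]. lra. }
    unfold Rminus. eapply Rle_trans; [apply Rabs_triang|]. rewrite Rabs_Ropp.
    pose proof (HG 0). pose proof (HG (- D)). unfold Rdiv in *. lra.
Qed.

Lemma gram_time_bound {A} (J : list A) g xi ph D delta : 0 < delta <= D ->
  RInt (gram J g xi ph) 0 delta <= / D * sumR J (fun j => sumR J (fun k =>
     if Z.eq_dec (xi j) (xi k)
     then 4 * PI * (Cmod (g j) * Cmod (g k)) * gap_weight D (ph j - ph k) else 0)).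
Proof.
  intros Hd.
  set (zjk := fun j k => Cmult (g j) (Cconj (g k))).
  set (O := sumR J (fun j => sumR J (fun k => if Z.eq_dec (xi j) (xi k)
        then 2 * PI * window_avg D (zjk j k) (ph j - ph k) else 0))).
  eapply Rle_trans.
  - apply (window_average_bound _ (fun s => sumR J (fun j => sumR J (fun k =>
        if Z.eq_dec (xi j) (xi k) then 2 * PI * window_int D (zjk j k) (ph j - ph k) s else 0))) O D delta);
      auto using gram_nonneg, gram_ex_RInt.
    + intros s. apply is_RInt_sumR; intros j _. apply is_RInt_sumR; intros k _.
      destruct (Z.eq_dec (xi j) (xi k)); [|apply (is_RInt_zero (V := R_NormedModule))].
      apply (is_RInt_scal (V := R_NormedModule)). apply window_int_correct.
    + apply is_RInt_sumR; intros j _. apply is_RInt_sumR; intros k _.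
      destruct (Z.eq_dec (xi j) (xi k)); [|apply (is_RInt_zero (V := R_NormedModule))].
      apply (is_RInt_scal (V := R_NormedModule)). apply window_avg_correct.
  - apply Rmult_le_compat_l; [left; apply Rinv_0_lt_compat; lra|].
    apply sumR_le; intros j _. apply sumR_le; intros k _.
    destruct (Z.eq_dec (xi j) (xi k)); [|lra].
    pose proof PI_RGT_0. pose proof (window_avg_bound D (zjk j k) (ph j - ph k) ltac:(lra)) as Hb.
    unfold zjk in Hb. rewrite Cmod_mult, Cmod_conj in Hb.
    pose proof (Rle_abs (window_avg D (zjk j k) (ph j - ph k))). unfold zjk in *. nra.
Qed.

(* Discrete estimate: Σ_{n'} min(w0, c/(n - n')²) over any window of
   consecutive integers is at most w0 + 4c.  It is proved by telescoping
   against a potential P with P(d) - P(d - 1) ≥ weight(d) and 0 ≤ P ≤ w0 + 4c. *)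

Definition inv_sq_weight (w0 c : R) (d : Z) : R := if Z.eq_dec d 0 then w0 else c / (IZR d * IZR d).

Definition inv_sq_potential (w0 c : R) (d : Z) : R :=
  if Z_le_gt_dec 1 d then w0 + 4 * c - 2 * c / (IZR d + 1)
  else if Z.eq_dec d 0 then w0 + 2 * c else 2 * c / IZR (- d).

(* 1/x² ≤ 2/(x(x+1)) = 2/x - 2/(x+1) for x ≥ 1 *)
Lemma inv_sq_le_telescope c x : 0 <= c -> 1 <= x -> c / (x * x) <= 2 * c / x - 2 * c / (x + 1).
Proof.
  intros Hc Hx. replace (2 * c / x - 2 * c / (x + 1)) with (2 * c / (x * (x + 1))) by (field; lra).
  assert (E : 2 * c / (x * (x + 1)) - c / (x * x) = c * (x - 1) / (x * x * (x + 1))) by (field; lra).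
  assert (0 <= c * (x - 1) / (x * x * (x + 1))).
  { apply Rmult_le_pos; [nra|]. left; apply Rinv_0_lt_compat. nra. }
  lra.
Qed.

Lemma inv_sq_potential_step w0 c d : 0 <= w0 -> 0 <= c ->
  inv_sq_weight w0 c d <= inv_sq_potential w0 c d - inv_sq_potential w0 c (d - 1).
Proof.
  intros Hw Hc. unfold inv_sq_weight, inv_sq_potential.
  destruct (Z_le_gt_dec 1 d); destruct (Z.eq_dec d 0); try lia;
    destruct (Z_le_gt_dec 1 (d - 1)); destruct (Z.eq_dec (d - 1) 0); try lia.
  - rewrite minus_IZR. assert (1 <= IZR (d - 1)) by (apply IZR_le; lia). rewrite minus_IZR in H.
    pose proof (inv_sq_le_telescope c (IZR d - 1 + 1) Hc ltac:(lra)).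
    replace (IZR d - 1 + 1) with (IZR d) in * by ring. lra.
  - replace d with 1%Z by lia. simpl. unfold Rdiv. lra.
  - subst. simpl. unfold Rdiv. rewrite Rinv_1. lra.
  - assert (1 <= IZR (- d)) by (apply IZR_le; lia).
    replace (- (d - 1))%Z with (- d + 1)%Z by lia. rewrite plus_IZR.
    pose proof (inv_sq_le_telescope c (IZR (- d)) Hc H).
    rewrite opp_IZR in *. replace (IZR d * IZR d) with (- IZR d * - IZR d) by ring. lra.
Qed.

Lemma inv_sq_potential_bounds w0 c d : 0 <= w0 -> 0 <= c ->
  0 <= inv_sq_potential w0 c d <= w0 + 4 * c.
Proof.
  intros Hw Hc.
  assert (Hfrac : forall x, 1 <= x -> 0 <= 2 * c / x <= 2 * c).
  { intros x Hx. split; [apply Rmult_le_pos; [lra | left; apply Rinv_0_lt_compat; lra]|].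
    apply (Rmult_le_reg_r x); [lra|]. unfold Rdiv. rewrite Rmult_assoc, Rinv_l by lra. nra. }
  unfold inv_sq_potential. destruct (Z_le_gt_dec 1 d).
  - assert (1 <= IZR d) by (apply IZR_le; lia). pose proof (Hfrac (IZR d + 1) ltac:(lra)). lra.
  - destruct (Z.eq_dec d 0); [lra|].
    assert (1 <= IZR (- d)) by (apply IZR_le; lia). pose proof (Hfrac _ H). lra.
Qed.

Lemma inv_sq_weight_window_sum w0 c M n : 0 <= w0 -> 0 <= c ->
  sumR (zwin M) (fun n' => inv_sq_weight w0 c (n - n')) <= w0 + 4 * c.
Proof.
  intros Hw Hc. set (top := (n + Z.of_nat M)%Z).
  assert (Htel : forall L, sumR (seq 0 L) (fun j => inv_sq_weight w0 c (top - Z.of_nat j))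
                  <= inv_sq_potential w0 c top - inv_sq_potential w0 c (top - Z.of_nat L)).
  { induction L; [simpl; replace (top - 0)%Z with top by lia; lra|].
    rewrite seq_S, sumR_app. simpl sumR.
    pose proof (inv_sq_potential_step w0 c (top - Z.of_nat L) Hw Hc).
    replace (top - Z.of_nat L - 1)%Z with (top - Z.of_nat (S L))%Z in H by lia. lra. }
  unfold zwin. rewrite sumR_map.
  rewrite (sumR_ext _ _ (fun j => inv_sq_weight w0 c (top - Z.of_nat j))) by (intros; f_equal; lia).
  pose proof (Htel (2 * M + 1)%nat).
  pose proof (inv_sq_potential_bounds w0 c top Hw Hc).
  pose proof (inv_sq_potential_bounds w0 c (top - Z.of_nat (2 * M + 1)) Hw Hc). lra.
Qed.

Lemma schur_symmetric {A} (J : list A) (W : A -> A -> R) (a : A -> R) :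
  (forall j k, W j k = W k j) ->
  sumR J (fun j => sumR J (fun k => W j k * (a j ^ 2 + a k ^ 2)))
  = 2 * sumR J (fun j => a j ^ 2 * sumR J (fun k => W j k)).
Proof.
  intros Hs.
  rewrite (sumR_ext J _ (fun j => sumR J (fun k => a j ^ 2 * W j k) + sumR J (fun k => W k j * a k ^ 2))).
  - rewrite sumR_plus, (sumR_swap J J (fun j k => W k j * a k ^ 2)).
    rewrite (sumR_ext J (fun j => sumR J (fun k => a j ^ 2 * W j k))
               (fun j => a j ^ 2 * sumR J (fun k => W j k))) by (intros; apply sumR_scal).
    rewrite (sumR_ext J (fun b => sumR J (fun c => W b c * a b ^ 2))
               (fun j => a j ^ 2 * sumR J (fun k => W j k))).
    + ring.
    + intros x _. rewrite sumR_scal_r. apply Rmult_comm.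
  - intros j _. rewrite <- sumR_plus. apply sumR_ext; intros k _. rewrite (Hs k j). ring.
Qed.

Definition lin_freq (s : Z) (j : Z * Z) : Z := (fst j + s * snd j)%Z.

Definition pair_kernel (s : Z) (ph : Z * Z -> R) (D : R) (j k : Z * Z) : R :=
  if Z.eq_dec (lin_freq s j) (lin_freq s k) then 2 * PI * gap_weight D (ph j - ph k) else 0.

Section SeparatedGram.
Variables (MK : nat) (L3 : list Z) (s : Z) (ph : Z * Z -> R) (Lam D : R).
Hypothesis HL3 : NoDup L3.
Hypothesis Hs : (s = 1 \/ s = -1)%Z.
Hypothesis HLam : 0 < Lam.
Hypothesis HD : 0 < D.
Local Notation J := (list_prod (zwin MK) L3).
Local Notation xi := (lin_freq s).
Local Notation W := (pair_kernel s ph D).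
Hypothesis Hsep : forall j k, In j J -> In k J -> xi j = xi k -> fst j <> fst k ->
  Lam * Rabs (IZR (fst j - fst k)) <= Rabs (ph j - ph k).

(* A pair (n', n3') with ξ equal to that of j = (n, n3) costs at most the
   inverse-square weight of n - n' (for n' = n it is j itself, with τ = 0). *)
Lemma separated_pair_weight j n' n3' : In j J -> In (n', n3') J -> xi j = xi (n', n3') ->
  gap_weight D (ph j - ph (n', n3')) <= inv_sq_weight (2 * D * D) (4 / (Lam * Lam)) (fst j - n').
Proof.
  intros Hj Hk e. unfold inv_sq_weight. destruct (Z.eq_dec (fst j - n') 0).
  - assert (n' = fst j) by lia. subst n'. unfold lin_freq in e; simpl in e.
    assert (snd j = n3') by (destruct Hs; subst; lia).
    destruct j as [j1 j2]; simpl in *; subst. rewrite Rminus_diag.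
    unfold gap_weight. destruct (Req_EM_T 0 0); lra.
  - pose proof (Hsep j (n', n3') Hj Hk e ltac:(simpl; lia)) as H. simpl in H.
    assert (Hd0 : IZR (fst j - n') <> 0) by (apply not_0_IZR; auto).
    set (d := IZR (fst j - n')) in *. set (tau := ph j - ph (n', n3')) in *.
    assert (Hpos : 0 < Lam * Rabs d) by (apply Rmult_lt_0_compat; [lra | apply Rabs_pos_lt; auto]).
    unfold gap_weight. destruct (Req_EM_T tau 0) as [E|_]; [rewrite E, Rabs_R0 in H; lra|].
    assert (Hsq : (Lam * d) * (Lam * d) <= tau * tau).
    { assert (Ed : Rabs d * Rabs d = d * d) by (rewrite <- Rabs_mult; apply Rabs_right; nra).
      assert (Et : Rabs tau * Rabs tau = tau * tau) by (rewrite <- Rabs_mult; apply Rabs_right; nra).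
      assert (Lam * Rabs d * (Lam * Rabs d) <= Rabs tau * Rabs tau)
        by (apply Rmult_le_compat; lra).
      replace (Lam * d * (Lam * d)) with (Lam * Lam * (Rabs d * Rabs d)) by (rewrite Ed; ring).
      rewrite <- Et. lra. }
    assert (Lam * d <> 0) by (apply Rmult_integral_contrapositive; split; lra).
    assert (0 < (Lam * d) * (Lam * d)) by nra.
    replace (4 / (Lam * Lam) / (d * d)) with (4 / ((Lam * d) * (Lam * d))) by (field; lra).
    unfold Rdiv. apply Rmult_le_compat_l; [lra|]. apply Rinv_le_contravar; auto.
Qed.

(* Row sums of the kernel: for fixed n' at most one n3' matches ξ, so a row is
   dominated by a window sum of inverse-square weights. *)
Lemma separated_row_bound j : In j J ->
  sumR J (fun k => W j k) <= 2 * PI * (2 * D * D + 16 / (Lam * Lam)).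
Proof.
  intros Hj. pose proof PI_RGT_0.
  assert (Hc : 0 <= 4 / (Lam * Lam)) by (unfold Rdiv; apply Rmult_le_pos; [lra|]; left; apply Rinv_0_lt_compat; nra).
  assert (Hw : forall d, 0 <= inv_sq_weight (2 * D * D) (4 / (Lam * Lam)) d).
  { intros d. unfold inv_sq_weight. destruct (Z.eq_dec d 0); [nra|].
    assert (IZR d <> 0) by (apply not_0_IZR; auto).
    unfold Rdiv. apply Rmult_le_pos; [lra|]. left; apply Rinv_0_lt_compat; nra. }
  rewrite sumR_prod.
  eapply Rle_trans with (sumR (zwin MK) (fun n' =>
     2 * PI * inv_sq_weight (2 * D * D) (4 / (Lam * Lam)) (fst j - n'))).
  - apply sumR_le; intros n' Hn'.
    eapply Rle_trans with (sumR L3 (fun n3' => if Z.eq_dec (xi j) (xi (n', n3'))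
       then 2 * PI * inv_sq_weight (2 * D * D) (4 / (Lam * Lam)) (fst j - n') else 0)).
    + apply sumR_le; intros n3' Hn3'. unfold pair_kernel. destruct (Z.eq_dec (xi j) (xi (n', n3'))); [| lra].
      apply Rmult_le_compat_l; [lra|]. apply separated_pair_weight; auto. apply in_prod; auto.
    + apply (sumR_indicator_le L3 (fun n3' => xi j = xi (n', n3'))); auto.
      * apply Rmult_le_pos; auto. lra.
      * intros x y _ _ Hx Hy. unfold lin_freq in *; simpl in *. destruct Hs; subst; lia.
  - rewrite sumR_scal. apply Rmult_le_compat_l; [lra|].
    replace (16 / (Lam * Lam)) with (4 * (4 / (Lam * Lam))) by (field; lra).
    apply inv_sq_weight_window_sum; auto. nra.
Qed.

Lemma separated_gram_bound (g : Z * Z -> C) (delta : R) : 0 < delta <= D ->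
  RInt (gram J g xi ph) 0 delta <=
  / D * (2 * (2 * PI * (2 * D * D + 16 / (Lam * Lam)))) * sumR J (fun j => Cmod (g j) ^ 2).
Proof.
  intros Hd. pose proof PI_RGT_0.
  eapply Rle_trans; [apply (gram_time_bound _ _ _ _ D); auto|].
  rewrite Rmult_assoc. apply Rmult_le_compat_l; [left; apply Rinv_0_lt_compat; lra|].
  eapply Rle_trans with (sumR J (fun j => sumR J (fun k => W j k * (Cmod (g j) ^ 2 + Cmod (g k) ^ 2)))).
  - apply sumR_le; intros j _. apply sumR_le; intros k _. unfold pair_kernel.
    destruct (Z.eq_dec (xi j) (xi k)); [| lra].
    (* 2|g_j||g_k| ≤ |g_j|² + |g_k|² *)
    pose proof (gap_weight_nonneg D (ph j - ph k)).
    assert (0 <= PI * gap_weight D (ph j - ph k)) by nra.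
    assert (0 <= PI * gap_weight D (ph j - ph k) * (Cmod (g j) - Cmod (g k)) ^ 2)
      by (apply Rmult_le_pos; [lra | apply pow2_ge_0]).
    nra.
  - rewrite schur_symmetric.
    2: { intros j k. unfold pair_kernel. destruct (Z.eq_dec (xi j) (xi k)); destruct (Z.eq_dec (xi k) (xi j));
         try lia; auto. replace (ph k - ph j) with (- (ph j - ph k)) by ring.
         unfold gap_weight. destruct (Req_EM_T (- (ph j - ph k)) 0); destruct (Req_EM_T (ph j - ph k) 0);
           try lra.
         replace (- (ph j - ph k) * - (ph j - ph k)) with ((ph j - ph k) * (ph j - ph k)) by ring.
         reflexivity. }
    rewrite Rmult_assoc. apply Rmult_le_compat_l; [lra|].
    rewrite <- sumR_scal. apply sumR_le; intros j Hj.
    rewrite (Rmult_comm _ (Cmod (g j) ^ 2)). apply Rmult_le_compat_l; [apply pow2_ge_0|].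
    apply separated_row_bound; auto.
Qed.

End SeparatedGram.

Lemma free_evol_sumC k a t x :
  free_evol k a t x = sumC (zwin (bnd k)) (fun n => Cmult (a n) (cexpi (IZR n * x - IZR n ^ 2 * t))).
Proof. apply zsum_sumC. Qed.

Lemma product_char_integral k1 k2 a1 a2 t n : supp_in k1 a1 ->
  is_RInt (V := C_R_NormedModule)
    (fun x => Cmult (Cmult (free_evol k1 a1 t x) (Cconj (free_evol k2 a2 t x))) (cexpi (- (IZR n * x))))
    0 (2 * PI)
    (Cmult (RtoC (2 * PI)) (sumC (zwin (bnd k2)) (fun n2 => Cmult (Cmult (a1 (n2 + n)%Z) (Cconj (a2 n2)))
        (cexpi (- (IZR (n2 + n) ^ 2 - IZR n2 ^ 2) * t))))).
Proof.
  intros Hs1. set (R1 := zwin (bnd k1)). set (R2 := zwin (bnd k2)).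
  apply (is_RInt_ext (V := C_R_NormedModule) (fun x => sumC R1 (fun n1 => sumC R2 (fun n2 =>
        Cmult (Cmult (a1 n1) (Cconj (a2 n2)))
              (cexpi (IZR (n1 - n2 - n) * x + (- (IZR n1 ^ 2 - IZR n2 ^ 2) * t))))))).
  { intros x _. rewrite !free_evol_sumC. fold R1 R2.
    rewrite sumC_conj, sumC_mult, <- sumC_mult_r.
    apply sumC_ext; intros n1 _. rewrite <- sumC_mult_r. apply sumC_ext; intros n2 _.
    rewrite Cmult_conj, cexpi_conj.
    replace (cexpi (IZR (n1 - n2 - n) * x + - (IZR n1 ^ 2 - IZR n2 ^ 2) * t)) with
      (Cmult (Cmult (cexpi (IZR n1 * x - IZR n1 ^ 2 * t)) (cexpi (- (IZR n2 * x - IZR n2 ^ 2 * t))))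
             (cexpi (- (IZR n * x)))) by (rewrite !cexpi_add; apply cexpi_eq; rewrite !minus_IZR; ring).
    ring. }
  replace (Cmult (RtoC (2 * PI)) _) with (sumC R1 (fun n1 => sumC R2 (fun n2 =>
     if Z.eq_dec (n1 - n2 - n) 0
     then Cmult (RtoC (2 * PI)) (Cmult (Cmult (a1 n1) (Cconj (a2 n2)))
                                       (cexpi (- (IZR n1 ^ 2 - IZR n2 ^ 2) * t)))
     else RtoC 0))).
  - apply is_RInt_sumC; intros n1 _. apply is_RInt_sumC; intros n2 _. apply char_integral.
  - rewrite sumC_swap, <- sumC_mult_l. apply sumC_ext; intros n2 _.
    rewrite (sumC_ext R1 _ (fun n1 => if Z.eq_dec n1 (n2 + n)
       then Cmult (RtoC (2 * PI)) (Cmult (Cmult (a1 n1) (Cconj (a2 n2)))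
                                         (cexpi (- (IZR n1 ^ 2 - IZR n2 ^ 2) * t)))
       else RtoC 0)).
    + apply sumC_pick; [apply NoDup_zwin|].
      intros Hn. rewrite (supp_in_zwin k1 a1 (n2 + n) Hs1 Hn). ring.
    + intros n1 _. destruct (Z.eq_dec (n1 - n2 - n) 0); destruct (Z.eq_dec n1 (n2 + n));
        try lia; auto.
Qed.

Lemma fcoef_product k1 k2 a1 a2 t n : supp_in k1 a1 ->
  fcoef (fun y => Cmult (free_evol k1 a1 t y) (Cconj (free_evol k2 a2 t y))) n =
  sumC (zwin (bnd k2)) (fun n2 => Cmult (Cmult (a1 (n2 + n)%Z) (Cconj (a2 n2)))
        (cexpi (- (IZR (n2 + n) ^ 2 - IZR n2 ^ 2) * t))).
Proof.
  intros Hs1. unfold fcoef.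
  rewrite (is_RInt_unique (V := C_R_CompleteNormedModule) _ _ _ _ (product_char_integral k1 k2 a1 a2 t n Hs1)).
  set (T := sumC _ _). assert (PI <> 0) by (pose proof PI_RGT_0; lra).
  transitivity (Cmult (Cmult (RtoC (/ (2 * PI))) (RtoC (2 * PI))) T); [ring|].
  replace (Cmult (RtoC (/ (2 * PI))) (RtoC (2 * PI))) with (RtoC 1); [ring|].
  apply injective_projections; simpl; field; auto.
Qed.

Definition cut_symbol (eta : R -> R) (m : Z -> C) (kK : nat) (n : Z) : C :=
  Cmult (m n) (RtoC (eta (IZR n / dy kK))).
Definition conj_sign (cj : bool) : Z := if cj then (-1)%Z else 1%Z.
Definition coef3 (cj : bool) (a3 : Z -> C) (n3 : Z) : C := if cj then Cconj (a3 n3) else a3 n3.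
Definition block_coef eta m kK cj (a1 a3 : Z -> C) (n2 : Z) (j : Z * Z) : C :=
  Cmult (Cmult (cut_symbol eta m kK (fst j)) (a1 (n2 + fst j)%Z)) (coef3 cj a3 (snd j)).
Definition block_xfreq (cj : bool) : Z * Z -> Z := lin_freq (conj_sign cj).
Definition block_tfreq (cj : bool) (n2 : Z) (j : Z * Z) : R :=
  IZR ((n2 + fst j) * (n2 + fst j) - n2 * n2 + conj_sign cj * (snd j * snd j))%Z.
Definition block_wave eta m kK k3 cj a1 a3 (n2 : Z) (t x : R) : C :=
  sumC (list_prod (zwin (bnd kK)) (zwin (bnd k3)))
     (fun j => Cmult (block_coef eta m kK cj a1 a3 n2 j)
                     (cexpi (IZR (block_xfreq cj j) * x - block_tfreq cj n2 j * t))).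

Lemma third_factor_sumC (k3 : nat) (cj : bool) (a3 : Z -> C) (t x : R) :
  (if cj then Cconj (free_evol k3 a3 t x) else free_evol k3 a3 t x) =
  sumC (zwin (bnd k3)) (fun n3 =>
    Cmult (coef3 cj a3 n3) (cexpi (IZR (conj_sign cj) * (IZR n3 * x - IZR n3 ^ 2 * t)))).
Proof.
  rewrite free_evol_sumC. unfold coef3, conj_sign. destruct cj.
  - rewrite sumC_conj. apply sumC_ext; intros.
    rewrite Cmult_conj, cexpi_conj. f_equal. apply cexpi_eq. simpl; ring.
  - apply sumC_ext; intros. f_equal. apply cexpi_eq. simpl; ring.
Qed.

Lemma output_expansion eta m kK k1 k2 k3 cj a1 a2 a3 t x : supp_in k1 a1 ->
  output eta m kK k1 k2 k3 cj a1 a2 a3 t x =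
  sumC (zwin (bnd k2)) (fun n2 => Cmult (Cconj (a2 n2)) (block_wave eta m kK k3 cj a1 a3 n2 t x)).
Proof.
  intros Hs1. unfold output, mult_op. rewrite third_factor_sumC, zsum_sumC.
  rewrite (sumC_ext (zwin (bnd kK)) _ (fun n => Cmult (cut_symbol eta m kK n) (Cmult
      (sumC (zwin (bnd k2)) (fun n2 => Cmult (Cmult (a1 (n2 + n)%Z) (Cconj (a2 n2)))
        (cexpi (- (IZR (n2 + n) ^ 2 - IZR n2 ^ 2) * t)))) (cexpi (IZR n * x)))))
    by (intros n _; rewrite fcoef_product; auto).
  rewrite <- sumC_mult_r.
  rewrite (sumC_ext (zwin (bnd kK)) _ (fun n => sumC (zwin (bnd k2)) (fun n2 =>
     sumC (zwin (bnd k3)) (fun n3 => Cmult (Cconj (a2 n2))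
       (Cmult (block_coef eta m kK cj a1 a3 n2 (n, n3))
              (cexpi (IZR (block_xfreq cj (n, n3)) * x - block_tfreq cj n2 (n, n3) * t))))))).
  - rewrite sumC_swap. apply sumC_ext; intros n2 _.
    unfold block_wave. rewrite <- sumC_mult_l, sumC_prod. reflexivity.
  - intros n _.
    rewrite <- (sumC_mult_r (zwin (bnd k2))), <- (sumC_mult_l (zwin (bnd k2))), sumC_mult.
    apply sumC_ext; intros n2 _. apply sumC_ext; intros n3 _.
    unfold block_coef, block_xfreq, lin_freq, block_tfreq; simpl fst; simpl snd.
    replace (cexpi (IZR (n + conj_sign cj * n3) * x
                    - IZR ((n2 + n) * (n2 + n) - n2 * n2 + conj_sign cj * (n3 * n3)) * t)) with
      (Cmult (Cmult (cexpi (- (IZR (n2 + n) ^ 2 - IZR n2 ^ 2) * t)) (cexpi (IZR n * x)))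
             (cexpi (IZR (conj_sign cj) * (IZR n3 * x - IZR n3 ^ 2 * t)))).
    + ring.
    + rewrite !cexpi_add. apply cexpi_eq.
      rewrite !plus_IZR, !minus_IZR, !mult_IZR, !plus_IZR. ring.
Qed.

Lemma parseval k a :
  l2T (phi_fun k a) = sqrt (2 * PI * sumR (zwin (bnd k)) (fun n => Cmod (a n) ^ 2)).
Proof.
  unfold l2T, phi_fun. f_equal.
  assert (H : is_RInt (fun x => Cmod (free_evol k a 0 x) ^ 2) 0 (2 * PI)
                (gram (zwin (bnd k)) a (fun n => n) (fun n => IZR n ^ 2) 0)).
  { eapply is_RInt_ext; [| apply gram_identity]. intros x _. rewrite free_evol_sumC. reflexivity. }
  rewrite (is_RInt_unique (V := R_CompleteNormedModule) _ _ _ _ H).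
  unfold gram. rewrite <- sumR_scal. apply sumR_ext; intros j Hj.
  rewrite sumR_pick; auto; [|apply NoDup_zwin].
  unfold re_phase. rewrite Rmult_0_r, cos_0, sin_0.
  change (Cmod (a j) ^ 2) with (fst (RtoC (Cmod (a j) ^ 2))). rewrite Cmod2_conj. ring.
Qed.

Definition coef_mass (k : nat) (a : Z -> C) : R := sumR (zwin (bnd k)) (fun n => Cmod (a n) ^ 2).

Lemma coef_mass_nonneg k a : 0 <= coef_mass k a.
Proof. apply sumR_nonneg; intros; apply pow2_ge_0. Qed.

Lemma eta_range eta : eta_ok eta -> forall x, 0 <= eta x <= 1.
Proof.
  intros (_ & _ & _ & H) x. destruct (H x) as [H1 H2]. unfold chi in *.
  destruct (Rle_dec (Rabs x) (4 / 3)); destruct (Rle_dec (Rabs x) (5 / 3)); lra.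
Qed.

Lemma block_tfreq_gap cj n2 n n3 n' n3' :
  block_xfreq cj (n, n3) = block_xfreq cj (n', n3') ->
  (block_tfreq cj n2 (n, n3) - block_tfreq cj n2 (n', n3'))
  = IZR (n - n') * IZR (2 * n2 + n + n' - (n3 + n3')).
Proof.
  unfold block_xfreq, lin_freq, block_tfreq, conj_sign; cbn [fst snd]. intros Hx.
  rewrite <- minus_IZR, <- mult_IZR. f_equal. destruct cj.
  - replace n3' with (n3 + n' - n)%Z by lia. ring.
  - replace n3' with (n3 + n - n')%Z by lia. ring.
Qed.

(* ‖H_{n2}(t)‖²_{L²_x} for the n2 in the support of a2 (|n2| ≥ N2/2), and 0 otherwise. *)
Definition block_gram eta m kK k2 k3 cj (a1 a3 : Z -> C) (n2 : Z) (t : R) : R :=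
  if Rle_dec (dy k2 / 2) (Rabs (IZR n2))
  then gram (list_prod (zwin (bnd kK)) (zwin (bnd k3))) (block_coef eta m kK cj a1 a3 n2)
            (block_xfreq cj) (block_tfreq cj n2) t
  else 0.

Definition output_gram eta m kK k2 k3 cj (a1 a2 a3 : Z -> C) : R -> R :=
  gram (list_prod (zwin (bnd k2)) (list_prod (zwin (bnd kK)) (zwin (bnd k3))))
       (fun q => Cmult (Cconj (a2 (fst q))) (block_coef eta m kK cj a1 a3 (fst q) (snd q)))
       (fun q => block_xfreq cj (snd q)) (fun q => block_tfreq cj (fst q) (snd q)).

Section OutputBound.
Variables (eta : R -> R) (m : Z -> C) (kK k1 k2 k3 : nat) (cj : bool) (a1 a2 a3 : Z -> C).
Variables (B D Lam delta : R).
Hypothesis Heta : eta_ok eta.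
Hypothesis Hm : forall n, Cmod (m n) <= B.
Hypothesis Hs1 : supp_in k1 a1.
Hypothesis Hs2 : supp_in k2 a2.
Hypothesis Hk2 : (1 <= k2)%nat.
Hypothesis HLam : 0 < Lam.
Hypothesis Hdelta_pos : 0 < delta.
Hypothesis Hdelta_le : delta <= D.
(* the frequency gap provided by N1 ~ N2 ≫ K, N3 *)
Hypothesis Hgap : forall n2 n n' n3 n3', dy k2 / 2 <= Rabs (IZR n2) ->
  In n (zwin (bnd kK)) -> In n' (zwin (bnd kK)) -> In n3 (zwin (bnd k3)) -> In n3' (zwin (bnd k3)) ->
  Lam <= Rabs (IZR (2 * n2 + n + n' - (n3 + n3'))).

Local Notation F := (output eta m kK k1 k2 k3 cj a1 a2 a3).
Local Notation J := (list_prod (zwin (bnd kK)) (zwin (bnd k3))).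
Local Notation block_gram := (block_gram eta m kK k2 k3 cj a1 a3).
Local Notation full_gram := (output_gram eta m kK k2 k3 cj a1 a2 a3).

Lemma output_l2x t : is_RInt (fun x => Cmod (F t x) ^ 2) 0 (2 * PI) (full_gram t).
Proof.
  unfold output_gram. eapply is_RInt_ext; [| apply gram_identity]. intros x _.
  rewrite output_expansion, sumC_prod by auto. do 2 f_equal.
  apply sumC_ext; intros n2 _. unfold block_wave. rewrite <- sumC_mult_l.
  apply sumC_ext; intros j _. simpl. ring.
Qed.

Lemma output_l2x_cauchy_schwarz t :
  full_gram t <= coef_mass k2 a2 * sumR (zwin (bnd k2)) (fun n2 => block_gram n2 t).
Proof.
  set (Hw := fun n2 x => if Rle_dec (dy k2 / 2) (Rabs (IZR n2))
                         then block_wave eta m kK k3 cj a1 a3 n2 t x else RtoC 0).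
  apply (is_RInt_le (fun x => Cmod (F t x) ^ 2)
     (fun x => coef_mass k2 a2 * sumR (zwin (bnd k2)) (fun n2 => Cmod (Hw n2 x) ^ 2)) 0 (2 * PI));
    [pose proof PI_RGT_0; lra | apply output_l2x | |].
  - apply (is_RInt_scal (V := R_NormedModule)). apply is_RInt_sumR; intros n2 _.
    unfold Hw, block_gram. destruct (Rle_dec (dy k2 / 2) (Rabs (IZR n2))); [apply gram_identity|].
    eapply is_RInt_ext; [| apply (is_RInt_zero (V := R_NormedModule))].
    intros. rewrite Cmod_0. change (@zero R_NormedModule) with 0. simpl. ring.
  - intros x _. rewrite output_expansion by auto.
    rewrite (sumC_ext (zwin (bnd k2)) _ (fun n2 => Cmult (Cconj (a2 n2)) (Hw n2 x))).
    + eapply Rle_trans; [apply sumC_cauchy_schwarz|]. right. unfold coef_mass. f_equal.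
      apply sumR_ext; intros; rewrite Cmod_conj; auto.
    + (* a2 vanishes at low frequencies, since k2 ≥ 1 *)
      intros n2 _. unfold Hw. destruct (Rle_dec (dy k2 / 2) (Rabs (IZR n2))); auto.
      replace (a2 n2) with (RtoC 0); [apply injective_projections; simpl; ring|].
      symmetry. apply Hs2. unfold in_I. destruct (Nat.eqb k2 0) eqn:E; [apply Nat.eqb_eq in E; lia | lra].
Qed.

Lemma output_time_cauchy_schwarz :
  RInt (fun t => RInt (fun x => Cmod (F t x) ^ 2) 0 (2 * PI)) 0 delta
  <= coef_mass k2 a2 * sumR (zwin (bnd k2)) (fun n2 => RInt (block_gram n2) 0 delta).
Proof.
  rewrite (RInt_ext _ full_gram) by (intros t _; apply is_RInt_unique, output_l2x).
  apply (is_RInt_le full_gram (fun t => coef_mass k2 a2 * sumR (zwin (bnd k2)) (fun n2 => block_gram n2 t))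
           0 delta); [lra | apply (RInt_correct (V := R_CompleteNormedModule)), gram_ex_RInt | |
                      intros; apply output_l2x_cauchy_schwarz].
  apply (is_RInt_scal (V := R_NormedModule)). apply is_RInt_sumR; intros n2 _.
  apply (RInt_correct (V := R_CompleteNormedModule)). unfold block_gram.
  destruct (Rle_dec (dy k2 / 2) (Rabs (IZR n2))); [apply gram_ex_RInt | apply (ex_RInt_const (V := R_NormedModule))].
Qed.

(* Each block is a separated Gram form, with rate Λ. *)
Lemma block_time_bound n2 :
  RInt (block_gram n2) 0 delta <=
  / D * (2 * (2 * PI * (2 * D * D + 16 / (Lam * Lam))))
  * sumR J (fun j => Cmod (block_coef eta m kK cj a1 a3 n2 j) ^ 2).
Proof.
  assert (HC : 0 <= / D * (2 * (2 * PI * (2 * D * D + 16 / (Lam * Lam))))).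
  { pose proof PI_RGT_0. apply Rmult_le_pos; [left; apply Rinv_0_lt_compat; lra|].
    assert (0 <= 16 / (Lam * Lam)) by (unfold Rdiv; apply Rmult_le_pos; [lra|]; left; apply Rinv_0_lt_compat; nra).
    nra. }
  unfold block_gram. destruct (Rle_dec (dy k2 / 2) (Rabs (IZR n2))) as [Hc|Hc].
  - apply (separated_gram_bound (bnd kK) (zwin (bnd k3)) (conj_sign cj)); auto; [apply NoDup_zwin | | lra |].
    + unfold conj_sign; destruct cj; auto.
    + intros [n n3] [n' n3'] Hj Hk Hxi Hne. cbn [fst snd] in *.
      apply in_prod_iff in Hj, Hk. destruct Hj as [Hn Hn3], Hk as [Hn' Hn3'].
      rewrite (block_tfreq_gap cj n2 n n3 n' n3') by auto.
      rewrite Rabs_mult, Rmult_comm. apply Rmult_le_compat_l; [apply Rabs_pos | apply Hgap; auto].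
  - replace (RInt (fun _ => 0) 0 delta) with 0.
    2: { symmetry. apply (is_RInt_unique (V := R_CompleteNormedModule)).
         apply (is_RInt_zero (V := R_NormedModule)). }
    apply Rmult_le_pos; auto. apply sumR_nonneg; intros; apply pow2_ge_0.
Qed.

(* |m η| ≤ B, so a block has mass at most B² Σ_{|n|≤2K} |a1(n2 + n)|² Σ|a3|². *)
Lemma block_coef_mass n2 :
  sumR J (fun j => Cmod (block_coef eta m kK cj a1 a3 n2 j) ^ 2) <=
  B ^ 2 * (sumR (zwin (bnd kK)) (fun n => Cmod (a1 (n2 + n)%Z) ^ 2) * coef_mass k3 a3).
Proof.
  rewrite sumR_prod, <- sumR_scal_r, <- sumR_scal. apply sumR_le; intros n _.
  unfold coef_mass. rewrite <- sumR_scal, <- sumR_scal. apply sumR_le; intros n3 _.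
  unfold block_coef. cbn [fst snd]. rewrite !Cmod_mult.
  assert (E3 : Cmod (coef3 cj a3 n3) = Cmod (a3 n3)) by (unfold coef3; destruct cj; auto; apply Cmod_conj).
  assert (Hc : Cmod (cut_symbol eta m kK n) <= B).
  { unfold cut_symbol. rewrite Cmod_mult, Cmod_R. pose proof (eta_range eta Heta (IZR n / dy kK)).
    rewrite Rabs_right by lra. pose proof (Hm n). pose proof (Cmod_ge_0 (m n)). nra. }
  rewrite E3. pose proof (Cmod_ge_0 (cut_symbol eta m kK n)).
  assert (Cmod (cut_symbol eta m kK n) ^ 2 <= B ^ 2) by nra.
  assert (0 <= Cmod (a1 (n2 + n)%Z) ^ 2 * Cmod (a3 n3) ^ 2) by (apply Rmult_le_pos; apply pow2_ge_0).
  replace ((Cmod (cut_symbol eta m kK n) * Cmod (a1 (n2 + n)%Z) * Cmod (a3 n3)) ^ 2) with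
    (Cmod (cut_symbol eta m kK n) ^ 2 * (Cmod (a1 (n2 + n)%Z) ^ 2 * Cmod (a3 n3) ^ 2)) by ring.
  apply Rmult_le_compat_r; auto.
Qed.

Lemma shifted_mass :
  sumR (zwin (bnd k2)) (fun n2 => sumR (zwin (bnd kK)) (fun n => Cmod (a1 (n2 + n)%Z) ^ 2))
  <= INR (2 * bnd kK + 1) * coef_mass k1 a1.
Proof.
  rewrite sumR_swap. eapply Rle_trans; [apply (sumR_le _ _ (fun _ => coef_mass k1 a1))|].
  - intros n _. apply (sumR_shift_le _ _ (fun y => Cmod (a1 y) ^ 2)); [intros; apply pow2_ge_0|].
    intros y Hy. rewrite (supp_in_zwin k1 a1 y Hs1 Hy), Cmod_0. ring.
  - rewrite sumR_const, zwin_length. right; ring.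
Qed.

Lemma output_coef_bound :
  RInt (fun t => RInt (fun x => Cmod (F t x) ^ 2) 0 (2 * PI)) 0 delta
  <= coef_mass k2 a2 * (/ D * (2 * (2 * PI * (2 * D * D + 16 / (Lam * Lam))))
      * (B ^ 2 * (coef_mass k3 a3 * (INR (2 * bnd kK + 1) * coef_mass k1 a1)))).
Proof.
  set (Cblk := / D * (2 * (2 * PI * (2 * D * D + 16 / (Lam * Lam))))).
  assert (HC : 0 <= Cblk).
  { pose proof PI_RGT_0. apply Rmult_le_pos; [left; apply Rinv_0_lt_compat; lra|].
    assert (0 <= 16 / (Lam * Lam)) by (unfold Rdiv; apply Rmult_le_pos; [lra|]; left; apply Rinv_0_lt_compat; nra).
    nra. }
  eapply Rle_trans; [apply output_time_cauchy_schwarz|].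
  apply Rmult_le_compat_l; [apply coef_mass_nonneg|].
  eapply Rle_trans.
  - apply (sumR_le _ _ (fun n2 => Cblk * (B ^ 2 *
       (sumR (zwin (bnd kK)) (fun n => Cmod (a1 (n2 + n)%Z) ^ 2) * coef_mass k3 a3)))).
    intros n2 _. eapply Rle_trans; [apply block_time_bound|].
    apply Rmult_le_compat_l; [auto | apply block_coef_mass].
  - rewrite sumR_scal, sumR_scal, sumR_scal_r. apply Rmult_le_compat_l; auto.
    apply Rmult_le_compat_l; [apply pow2_ge_0|]. rewrite Rmult_comm.
    apply Rmult_le_compat_l; [apply coef_mass_nonneg | apply shifted_mass].
Qed.

End OutputBound.

Lemma frequency_gap (A N1 N2 N3 K x y y' z z' : R) : 1 <= A ->
  N1 <= A * N2 -> 16 * A * N3 <= N1 -> 16 * A * K <= N1 ->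
  N2 / 2 <= Rabs x -> Rabs y <= 2 * K -> Rabs y' <= 2 * K -> Rabs z <= 2 * N3 -> Rabs z' <= 2 * N3 ->
  N1 / (2 * A) <= Rabs (2 * x + y + y' - (z + z')).
Proof.
  intros HA H12 H3 HK Hx Hy Hy' Hz Hz'.
  assert (Hlow : N2 - 4 * K - 4 * N3 <= Rabs (2 * x + y + y' - (z + z'))).
  { pose proof (Rabs_triang_inv (2 * x) (z + z' - y - y')) as H.
    replace (2 * x - (z + z' - y - y')) with (2 * x + y + y' - (z + z')) in H by ring.
    rewrite Rabs_mult, (Rabs_right 2) in H by lra.
    pose proof (Rabs_triang (z + z' - y) (- y')). pose proof (Rabs_triang (z + z') (- y)).
    pose proof (Rabs_triang z z'). rewrite Rabs_Ropp in *. unfold Rminus in *. lra. }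
  apply (Rmult_le_reg_l (2 * A)); [lra|].
  replace (2 * A * (N1 / (2 * A))) with N1 by (field; lra). nra.
Qed.

(* The constant 10 A (B + 1) absorbs the numerical factors: with 4K + 1 ≤ 5K and π² ≥ 4,
   264 π A B² (4K + 1) ≤ 1320 π A B² K ≤ 8 π³ (100 A B²) K ≤ 8 π³ (10 A (B + 1))² K. *)
Lemma constant_absorbs (A B K : R) : 1 <= A -> 0 <= B -> 1 <= K ->
  264 * PI * A * B ^ 2 * (4 * K + 1) <= (10 * A * (B + 1)) ^ 2 * (8 * (PI * PI * PI)) * K.
Proof.
  intros HA HB HK. pose proof PI_RGT_0. pose proof PI2_1.
  assert (Hsq : 100 * A * B ^ 2 <= (10 * A * (B + 1)) ^ 2).
  { replace ((10 * A * (B + 1)) ^ 2) with (100 * (A * A) * ((B + 1) * (B + 1))) by ring.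
    replace (100 * A * B ^ 2) with (100 * A * (B * B)) by ring.
    apply Rmult_le_compat; nra. }
  assert (HAB : 0 <= PI * (A * B ^ 2 * K)).
  { apply Rmult_le_pos; [lra|]. apply Rmult_le_pos; [|lra]. apply Rmult_le_pos; [lra | apply pow2_ge_0]. }
  assert (H5K : 264 * PI * A * B ^ 2 * (4 * K + 1) <= 1320 * (PI * (A * B ^ 2 * K))).
  { replace (264 * PI * A * B ^ 2 * (4 * K + 1)) with (264 * (PI * A * B ^ 2) * (4 * K + 1)) by ring.
    replace (1320 * (PI * (A * B ^ 2 * K))) with (264 * (PI * A * B ^ 2) * (5 * K)) by ring.
    apply Rmult_le_compat_l; [|lra].
    apply Rmult_le_pos; [lra|]. apply Rmult_le_pos; [apply Rmult_le_pos; lra | apply pow2_ge_0]. }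
  assert (Hpi : 1320 * (PI * (A * B ^ 2 * K)) <= 8 * (PI * PI * PI) * K * (100 * A * B ^ 2)).
  { replace (8 * (PI * PI * PI) * K * (100 * A * B ^ 2)) with (800 * (PI * PI) * (PI * (A * B ^ 2 * K)))
      by ring.
    apply Rmult_le_compat_r; nra. }
  assert (0 <= 8 * (PI * PI * PI) * K).
  { apply Rmult_le_pos; [|lra]. apply Rmult_le_pos; [lra|].
    apply Rmult_le_pos; [apply Rmult_le_pos|]; lra. }
  pose proof (Rmult_le_compat_l _ _ _ H1 Hsq). nra.
Qed.

Lemma sqrt_mult5 (c k x1 x2 x3 : R) : 0 <= c -> 0 <= k -> 0 <= x1 -> 0 <= x2 -> 0 <= x3 ->
  sqrt (c ^ 2 * k * x1 * x2 * x3) = c * sqrt k * sqrt x1 * sqrt x2 * sqrt x3.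
Proof.
  intros Hc Hk H1 H2 H3.
  rewrite !sqrt_mult_alt by (repeat apply Rmult_le_pos; first [lra | apply pow2_ge_0]).
  rewrite sqrt_pow2 by auto. reflexivity.
Qed.

(* The final bookkeeping: with D = A/N1 and Λ = N1/(2A) the block constant
   (4π/D)(2D² + 16/Λ²) equals 264πA/N1, and the estimate holds with C = 10 A (B + 1). *)
Lemma final_constant (A B K N1 X A1 A2 A3 : R) :
  1 <= A -> 0 <= B -> 1 <= K -> 0 < N1 -> 0 <= A1 -> 0 <= A2 -> 0 <= A3 ->
  X <= A2 * (/ (A / N1) * (2 * (2 * PI * (2 * (A / N1) * (A / N1) + 16 / (N1 / (2 * A) * (N1 / (2 * A))))))
             * (B ^ 2 * (A3 * ((4 * K + 1) * A1)))) ->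
  sqrt X <= 10 * A * (B + 1) * sqrt (K / N1)
            * sqrt (2 * PI * A1) * sqrt (2 * PI * A2) * sqrt (2 * PI * A3).
Proof.
  intros HA HB HK HN HA1 HA2 HA3 HX. pose proof PI_RGT_0.
  rewrite <- sqrt_mult5 by (try apply Rdiv_le_0_compat; nra).
  apply sqrt_le_1_alt. eapply Rle_trans; [apply HX|].
  replace (A2 * _) with (264 * PI * A * B ^ 2 * (4 * K + 1) * (A1 * A2 * A3 / N1)) by (field; lra).
  replace (_ * (2 * PI * A3)) with ((10 * A * (B + 1)) ^ 2 * (8 * (PI * PI * PI)) * K * (A1 * A2 * A3 / N1))
    by (field; lra).
  apply Rmult_le_compat_r; [|apply constant_absorbs; auto].
  apply Rdiv_le_0_compat; [|lra]. repeat apply Rmult_le_pos; auto.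
Qed.

Lemma bounded_symbol_estimate eta (Heta : eta_ok eta) (A : R) (HA : 1 <= A) (B : R) (HB : 0 <= B) :
  estimate_holds eta A (16 * A) (10 * A * (B + 1)) (fun m => forall n, Cmod (m n) <= B).
Proof.
  intros k1 k2 k3 kK a1 a2 a3 delta cj m Hm H12 H21 H3 HK Hs1 Hs2 Hs3 Hd0 Hd.
  pose proof (dy_ge_1 k1). pose proof (dy_ge_1 k2). pose proof (dy_ge_1 k3). pose proof (dy_ge_1 kK).
  (* N2 ≥ N1/A ≥ 16 N3 > 1, so k2 ≥ 1 *)
  assert (Hk2 : (1 <= k2)%nat).
  { destruct k2; [|lia]. unfold dy in H12 at 2. simpl in H12. nra. }
  assert (Hgap : forall n2 n n' n3 n3', dy k2 / 2 <= Rabs (IZR n2) ->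
     In n (zwin (bnd kK)) -> In n' (zwin (bnd kK)) -> In n3 (zwin (bnd k3)) -> In n3' (zwin (bnd k3)) ->
     dy k1 / (2 * A) <= Rabs (IZR (2 * n2 + n + n' - (n3 + n3')))).
  { intros n2 n n' n3 n3' Hc Hn Hn' Hn3 Hn3'. rewrite minus_IZR, !plus_IZR, mult_IZR.
    apply zwin_bnd_abs in Hn, Hn', Hn3, Hn3'.
    apply (frequency_gap A (dy k1) (dy k2) (dy k3) (dy kK)); auto; lra. }
  (* the coefficient bound with time scale D = A/N1 ≥ δ and separation rate Λ = N1/(2A) *)
  pose proof (output_coef_bound eta m kK k1 k2 k3 cj a1 a2 a3 B (A / dy k1) (dy k1 / (2 * A)) delta
                Heta Hm Hs1 Hs2 Hk2 ltac:(apply Rdiv_lt_0_compat; lra) Hd0 Hd Hgap) as Hout.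
  replace (INR (2 * bnd kK + 1)) with (4 * dy kK + 1) in Hout
    by (rewrite plus_INR, mult_INR, (INR_IZR_INZ (bnd kK)), IZR_bnd; simpl; ring).
  unfold l2tx. rewrite !parseval. fold (coef_mass k1 a1) (coef_mass k2 a2) (coef_mass k3 a3).
  apply final_constant; auto using coef_mass_nonneg; lra.
Qed.

Lemma hilbert_symbol_bound n : Cmod (hsym n) <= 1.
Proof.
  unfold hsym, Cmod. cbn [fst snd]. rewrite <- sqrt_1. apply sqrt_le_1_alt.
  destruct n; simpl; lra.
Qed.

Theorem lemma2p10 :
  forall eta : R -> R, eta_ok eta ->
  forall A : R, 1 <= A ->
    (exists C0 Cst : R, 0 < C0 /\ 0 < Cst /\
       estimate_holds eta A C0 Cst (fun m => m = hsym)) /\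
    (forall B : R, 0 <= B ->
       exists C0 Cst : R, 0 < C0 /\ 0 < Cst /\
         estimate_holds eta A C0 Cst (fun m => forall n : Z, Cmod (m n) <= B)).
Proof.
  intros eta Heta A HA. split.
  - (* the Hilbert transform has symbol bounded by 1 *)
    exists (16 * A), (10 * A * (1 + 1)). split; [lra | split; [nra|]].
    intros k1 k2 k3 kK a1 a2 a3 delta cj m Hm.
    apply (bounded_symbol_estimate eta Heta A HA 1 ltac:(lra)).
    intros n. subst m. apply hilbert_symbol_bound.
  - intros B HB. exists (16 * A), (10 * A * (B + 1)). split; [lra | split; [nra|]].
    apply bounded_symbol_estimate; auto.
Qed.
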